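(* Let $G$ be a very well-covered graph of girth at least $4$ (i.e., $G$ contains no triangle). Then the following are equivalent: (i) $\Psi(G)$ is a greedoid on $V(G)$; (ii) $G$ has a unique maximum matching (equivalently, since $G$ has a perfect matching, $G$ has a unique perfect matching).
   Context: All graphs are finite, simple, undirected. For $A\subseteq V(G)$, $N(A)=\{v\in V(G)-A: N(v)\cap A\neq\emptyset\}$ and $N[A]=A\cup N(A)$; $G[X]$ is the subgraph induced by $X$. A stable set is a set of pairwise non-adjacent vertices; $\alpha(G)$ is the maximum size of a stable set. $G$ is well-covered if all its maximal stable sets have the same cardinality, and very well-covered if it is well-covered, has no isolated vertices, and $|V(G)|=2\alpha(G)$. A set $A\subseteq V(G)$ is a local maximum stable set of $G$ if $A$ is a maximum stable set of $G[N[A]]$; $\Psi(G)$ denotes the family of all local maximum stable sets of $G$. A greedoid on a finite set $V$ is a non-empty family $\mathcal{F}\subseteq 2^V$ such that (Accessibility) every non-empty $X\in\mathcal{F}$ has an element $x\in X$ with $X-\{x\}\in\mathcal{F}$, and (Exchange) for all $X,Y\in\mathcal{F}$ with $|X|=|Y|+1$ there is $x\in X-Y$ with $Y\cup\{x\}\in\mathcal{F}$. *)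

(* A finite simple graph is a symmetric irreflexive
   relation e : rel T on a finite type T (vertex set V(G) = T). *)
From mathcomp Require Import all_boot.
Set Implicit Arguments. Unset Strict Implicit. Unset Printing Implicit Defensive.

Section Graph.
Variables (T : finType) (e : rel T).

Definition simple_graph : Prop := symmetric e /\ irreflexive e.

Definition nbhd (A : {set T}) : {set T} :=
  [set v | (v \notin A) && [exists a in A, e v a]].
Definition cnbhd (A : {set T}) : {set T} := A :|: nbhd A.

Definition stable (A : {set T}) : bool :=
  [forall x in A, forall y in A, ~~ e x y].

Definition alpha : nat := \max_(A : {set T} | stable A) #|A|.

Definition maximal_stable (A : {set T}) : bool :=
  stable A && [forall B : {set T}, (A \proper B) ==> ~~ stable B].

Definition well_covered : Prop :=
  forall A B : {set T}, maximal_stable A -> maximal_stable B -> #|A| = #|B|.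

Definition no_isolated : Prop := forall v : T, exists u : T, e v u.

Definition very_well_covered : Prop :=
  [/\ well_covered, no_isolated & #|T| = 2 * alpha].

Definition triangle_free : Prop :=
  forall x y z : T, ~ [&& e x y, e y z & e x z].

(* A is a local maximum stable set: a maximum stable set of G[N[A]] *)
Definition local_max_stable (A : {set T}) : bool :=
  stable A && [forall B : {set T},
     ((B \subset cnbhd A) && stable B) ==> (#|B| <= #|A|)].

Definition Psi : {set {set T}} := [set A | local_max_stable A].

Definition is_edge (f : {set T}) : bool :=
  [exists x, exists y, e x y && (f == [set x; y])].

Definition matching (M : {set {set T}}) : bool :=
  [forall f in M, is_edge f] &&
  [forall f in M, forall g in M, (f != g) ==> [disjoint f & g]].

Definition maximum_matching (M : {set {set T}}) : bool :=
  matching M && [forall M' : {set {set T}}, matching M' ==> (#|M'| <= #|M|)].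

Definition unique_maximum_matching : Prop :=
  exists M, maximum_matching M /\ forall M', maximum_matching M' -> M' = M.

End Graph.

Definition greedoid (T : finType) (F : {set {set T}}) : Prop :=
  [/\ F != set0,
      (forall X, X \in F -> X != set0 -> exists2 x, x \in X & X :\ x \in F) &
      (forall X Y, X \in F -> Y \in F -> #|X| = #|Y|.+1 ->
         exists2 x, x \in X :\: Y & x |: Y \in F)].

From mathcomp Require Import all_boot.
Set Implicit Arguments. Unset Strict Implicit. Unset Printing Implicit Defensive.

(* Let m be a perfect matching, seen as an involution with x ~ m x for all x.
   In a very well-covered graph every maximal stable set has |V|/2 vertices, so it
   meets every edge {x, m x}; hence u ~ x and v ~ m x force u ~ v.  With this, the
   local maximum stable sets are exactly the stable sets A that are closed under
   "x in A, x ~ y implies m y in A": if A is not, trading the neighbours of y in A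
   for their partners and adding y gives a larger stable subset of N[A].
   If m is the only perfect matching, accessibility and exchange hold for these
   closed sets, because a failure produces a stable set permuted in such a way that
   the edges of m along it can be rotated into a second perfect matching.
   Conversely, if Psi is a greedoid, building a member of Psi one vertex at a time
   gives a matching of the same size inside its closed neighbourhood, so a maximum
   stable set gives a perfect matching m; the same induction shows that any other
   perfect matching agrees with m on every member of Psi, and every vertex lies in
   a maximum stable set. *)

Lemma disjointP (T : finType) (A B : {pred T}) :
  reflect (forall x, x \in A -> x \in B -> False) [disjoint A & B].
Proof.
apply: (iffP pred0P) => [H x xA xB|H x /=]; first by move: (H x); rewrite /= xA xB.
by apply/andP => [[]]; apply: H.
Qed.

Lemma eq_set2 (T : finType) (x y a b : T) :
  [set x; y] = [set a; b] -> (x = a /\ y = b) \/ (x = b /\ y = a).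
Proof.
move=> E.
have /set2P xab : x \in [set a; b] by rewrite -E set21.
have /set2P yab : y \in [set a; b] by rewrite -E set22.
have axy : a \in [set x; y] by rewrite E set21.
have bxy : b \in [set x; y] by rewrite E set22.
case: xab yab => ex [] ey; subst x y; auto.
  by move: bxy; rewrite !inE orbb => /eqP ->; auto.
by move: axy; rewrite !inE orbb => /eqP ->; auto.
Qed.

Section StableSets.
Variables (T : finType) (e : rel T).

Lemma stableP (A : {set T}) :
  reflect (forall x y, x \in A -> y \in A -> ~~ e x y) (stable e A).
Proof.
apply: (iffP forall_inP) => H; last by move=> x xA; apply/forall_inP => y; apply: H.
by move=> x y xA; move/forall_inP: (H x xA); apply.
Qed.

Lemma stableS (A B : {set T}) : A \subset B -> stable e B -> stable e A.
Proof.
by move=> sAB /stableP sB; apply/stableP => x y /(subsetP sAB) xB /(subsetP sAB); apply: sB.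
Qed.

Lemma stable0 : stable e set0.
Proof. by apply/stableP => x y; rewrite inE. Qed.

Lemma stable_leq_alpha (A : {set T}) : stable e A -> #|A| <= alpha e.
Proof. exact: (@leq_bigmax_cond _ (stable e) (fun A => #|A|)). Qed.

Lemma alpha_witness : exists2 S, stable e S & #|S| = alpha e.
Proof.
have [|S sS cS] := @eq_bigmax_cond _ (stable e) (fun A => #|A|).
  by apply/card_gt0P; exists set0; apply: stable0.
by exists S; rewrite // /alpha cS.
Qed.

Lemma maximal_stableP (W : {set T}) :
  reflect (stable e W /\ forall B : {set T}, W \proper B -> ~~ stable e B)
          (maximal_stable e W).
Proof.
apply: (iffP andP) => [[sW /forallP H]|[sW H]]; split => //.
  by move=> B; apply/implyP.
by apply/forallP => B; apply/implyP; apply: H.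
Qed.

Lemma maximal_stable_ext (X : {set T}) :
  stable e X -> exists2 W, maximal_stable e W & X \subset W.
Proof.
move=> sX; have [W /maxsetP [sW HW] XW] := maxset_exists sX.
exists W => //; apply/maximal_stableP; split => // B pWB; apply/negP => sB.
by move: (pWB); rewrite (HW B sB (proper_sub pWB)) properE subxx.
Qed.

Lemma card_maximal_stable (W : {set T}) :
  well_covered e -> maximal_stable e W -> #|W| = alpha e.
Proof.
move=> wc mW; have [S sS cS] := alpha_witness.
rewrite (wc _ S mW) //; apply/maximal_stableP; split => // B pSB.
by apply/negP => /stable_leq_alpha; rewrite -cS leqNgt proper_card.
Qed.

Lemma cnbhdP (A : {set T}) (y : T) :
  reflect (y \in A \/ exists2 a, a \in A & e y a) (y \in cnbhd e A).
Proof.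
rewrite !inE; case: (y \in A); first by left; left.
by apply: (iffP exists_inP) => [[a aA eya]|[//|[a aA eya]]]; [right|]; exists a.
Qed.

Lemma cnbhdS (A B : {set T}) : A \subset B -> cnbhd e A \subset cnbhd e B.
Proof.
move=> sAB; apply/subsetP => z /cnbhdP zA; apply/cnbhdP.
case: zA => [/(subsetP sAB)|[a /(subsetP sAB) aB eza]]; [left|right] => //.
by exists a.
Qed.

Lemma local_maxP (A : {set T}) :
  reflect (stable e A /\
           forall B : {set T}, B \subset cnbhd e A -> stable e B -> #|B| <= #|A|)
          (local_max_stable e A).
Proof.
apply: (iffP andP) => [[sA /forallP H]|[sA H]]; split => //.
  by move=> B sub sB; move: (H B); rewrite sub sB.
by apply/forallP => B; apply/implyP => /andP [sub sB]; apply: H.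
Qed.

Lemma PsiE (A : {set T}) : (A \in Psi e) = local_max_stable e A.
Proof. by rewrite inE. Qed.

Lemma maximum_stable_Psi (S : {set T}) : stable e S -> #|S| = alpha e -> S \in Psi e.
Proof.
by move=> sS cS; rewrite PsiE; apply/local_maxP; split=> // B _ /stable_leq_alpha; rewrite cS.
Qed.

Hypotheses (sym : symmetric e) (irr : irreflexive e).

Lemma stable1 (x : T) : stable e [set x].
Proof. by apply/stableP => a b /set1P -> /set1P ->; rewrite irr. Qed.

Lemma stable2 (u v : T) : ~~ e u v -> stable e [set u; v].
Proof.
by move=> nuv; apply/stableP => a b /set2P [->|->] /set2P [->|->]; rewrite ?irr // sym.
Qed.

Lemma stableU (A B : {set T}) :
  stable e A -> stable e B -> (forall a b, a \in A -> b \in B -> ~~ e a b) ->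
  stable e (A :|: B).
Proof.
move=> /stableP sA /stableP sB H; apply/stableP => x y.
by case/setUP => xA /setUP [] yB; [apply: sA | apply: H | rewrite sym; apply: H | apply: sB].
Qed.

Lemma stableU1 (x : T) (A : {set T}) :
  stable e A -> (forall a, a \in A -> ~~ e x a) -> stable e (x |: A).
Proof. by move=> sA H; apply: stableU (stable1 x) sA _ => a b /set1P ->; apply: H. Qed.

Lemma stableU_cnbhd (B R : {set T}) :
  stable e B -> stable e R -> [disjoint R & cnbhd e B] -> stable e (B :|: R).
Proof.
move=> sB sR dRB; apply: stableU => // a r aB rR; apply/negP => ear.
have : r \in cnbhd e B by apply/cnbhdP; right; exists a; rewrite // sym.
by rewrite (disjointFr dRB rR).
Qed.

End StableSets.

Definition pairing (T : finType) (m : T -> T) : {set {set T}} := [set [set x; m x] | x : T].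

Section Matchings.
Variables (T : finType) (e : rel T).

Lemma matchingP (M : {set {set T}}) :
  reflect ((forall f, f \in M -> is_edge e f) /\
           (forall f g, f \in M -> g \in M -> f != g -> [disjoint f & g]))
          (matching e M).
Proof.
apply: (iffP andP) => [[/forall_inP H1 /forall_inP H2]|[H1 H2]]; split => //.
- by move=> f g fM gM; move/forall_inP: (H2 f fM) => /(_ g gM) /implyP.
- exact/forall_inP.
- by apply/forall_inP => f fM; apply/forall_inP => g gM; apply/implyP; apply: H2.
Qed.

Lemma matchingS (M M' : {set {set T}}) : M' \subset M -> matching e M -> matching e M'.
Proof.
move=> sM /matchingP [H1 H2]; apply/matchingP.
by split=> [f /(subsetP sM)|f g /(subsetP sM) fM /(subsetP sM)]; [apply: H1 | apply: H2].
Qed.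

Lemma matching1 (f : {set T}) : is_edge e f -> matching e [set f].
Proof.
by move=> ef; apply/matchingP; split => [g /set1P -> //|g h /set1P -> /set1P ->]; rewrite eqxx.
Qed.

Lemma matchingU (M1 M2 : {set {set T}}) :
  matching e M1 -> matching e M2 -> [disjoint cover M1 & cover M2] ->
  matching e (M1 :|: M2).
Proof.
move=> /matchingP [E1 D1] /matchingP [E2 D2] D12.
have D f g : f \in M1 -> g \in M2 -> [disjoint f & g].
  move=> fM gM; apply: disjointWl (bigcup_sup _ fM) _.
  exact: disjointWr (bigcup_sup _ gM) D12.
apply/matchingP; split => [f /setUP [] ?|f g /setUP [] fM /setUP [] gM ne]; auto.
by rewrite disjoint_sym; apply: D.
Qed.

Lemma is_edge_set2 (x y : T) : e x y -> is_edge e [set x; y].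
Proof. by move=> exy; apply/existsP; exists x; apply/existsP; exists y; rewrite exy eqxx. Qed.

Lemma card_matchingU1 (M : {set {set T}}) (x y : T) :
  x \notin cover M -> #|[set x; y] |: M| = #|M|.+1.
Proof.
move=> xM; rewrite cardsU1; case: (boolP ([set x; y] \in M)) => // xyM.
by case/negP: xM; apply/bigcupP; exists [set x; y]; rewrite ?set21.
Qed.

Lemma matchingU1 (M : {set {set T}}) (x y : T) :
  e x y -> x \notin cover M -> y \notin cover M -> matching e M ->
  matching e ([set x; y] |: M).
Proof.
move=> exy xM yM mM; apply: matchingU (matching1 (is_edge_set2 exy)) mM _.
by rewrite cover1; apply/disjointP => z /set2P [] ->; apply/negP.
Qed.

Hypothesis irr : irreflexive e.

Lemma card_edge (f : {set T}) : is_edge e f -> #|f| = 2.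
Proof.
case/existsP => a /existsP [b /andP [eab /eqP ->]].
by rewrite cards2; case: eqP eab => [->|]; rewrite ?irr.
Qed.

Lemma card_cover_matching (M : {set {set T}}) : matching e M -> #|cover M| = 2 * #|M|.
Proof.
move=> /matchingP [H1 H2].
have /eqP <- : trivIset M by apply/trivIsetP => A B AM BM; apply: H2.
by rewrite mulnC -sum_nat_const; apply: eq_bigr => f /H1 /card_edge.
Qed.

Lemma matching_leq (M : {set {set T}}) : matching e M -> 2 * #|M| <= #|T|.
Proof. by move=> mM; rewrite -card_cover_matching ?max_card. Qed.

Lemma maximum_matchingP (M : {set {set T}}) :
  reflect (matching e M /\ forall M', matching e M' -> #|M'| <= #|M|)
          (maximum_matching e M).
Proof.
apply: (iffP andP) => [[mM /forallP H]|[mM H]]; split => //.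
  by move=> M'; apply/implyP.
by apply/forallP => M'; apply/implyP; apply: H.
Qed.

Lemma perfect_maximum (M : {set {set T}}) :
  matching e M -> cover M = setT -> maximum_matching e M.
Proof.
move=> mM cM; apply/maximum_matchingP; split => // M' /matching_leq.
by rewrite -cardsT -cM card_cover_matching // leq_pmul2l.
Qed.

Lemma maximum_perfect (M M' : {set {set T}}) :
  matching e M -> cover M = setT -> maximum_matching e M' -> cover M' = setT.
Proof.
move=> mM cM /maximum_matchingP [mM' /(_ M mM) le].
apply/eqP; rewrite eqEcard subsetT -cM !card_cover_matching //.
by rewrite leq_pmul2l.
Qed.

Hypothesis sym : symmetric e.

Lemma edge_set2 (x y : T) : is_edge e [set x; y] -> e x y.
Proof.
case/existsP => a /existsP [b /andP [eab /eqP E]].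
by case: (eq_set2 E) => [[-> ->]|[-> ->]]; rewrite // sym.
Qed.

Lemma matching_partner_uniq (M : {set {set T}}) (x y z : T) :
  matching e M -> [set x; y] \in M -> [set x; z] \in M -> y = z.
Proof.
move=> /matchingP [H1 H2] xyM xzM.
case: (eqVneq [set x; y] [set x; z]) => [/eq_set2 [[_ //]|[exz eyx]]|ne].
  by move: (edge_set2 (H1 _ xyM)); rewrite eyx irr.
by have /disjointP/(_ x (set21 x y) (set21 x z)) := H2 _ _ xyM xzM ne.
Qed.

Lemma perfect_pairing (M : {set {set T}}) :
  matching e M -> cover M = setT ->
  exists m, [/\ forall x, e x (m x), involutive m & M = pairing m].
Proof.
move=> mM cM; have /matchingP [edgeM _] := mM.
have partner x : exists y, [set x; y] \in M.
  have : x \in cover M by rewrite cM inE.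
  case/bigcupP => f fM; case/existsP: (edgeM f fM) => a /existsP [b /andP [_ /eqP fE]].
  by rewrite fE => /set2P [] ->; [exists b | exists a; rewrite setUC]; rewrite -fE.
pose m x := odflt x [pick y | [set x; y] \in M].
have mM' x : [set x; m x] \in M.
  by rewrite /m; case: pickP => [y //|none]; case: (partner x) => y; rewrite none.
have mm : involutive m.
  by move=> x; apply: (matching_partner_uniq mM (mM' (m x))); rewrite setUC.
exists m; split => // [x|]; first exact: (edge_set2 (edgeM _ (mM' x))).
apply/setP => f; apply/idP/imsetP => [fM|[x _ ->] //].
case/existsP: (edgeM f fM) => a /existsP [b /andP [_ /eqP fE]].
exists a => //; rewrite fE; congr [set a; _].
by apply: (matching_partner_uniq mM _ (mM' a)); rewrite -fE.
Qed.

Hypothesis noi : no_isolated e.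

Lemma unique_maximum_perfect (M : {set {set T}}) :
  maximum_matching e M -> (forall M', maximum_matching e M' -> M' = M) ->
  cover M = setT.
Proof.
move=> /maximum_matchingP [mM maxM] uniqM.
apply/eqP; rewrite eqEsubset subsetT /=; apply/subsetP => w _.
apply/negPn/negP => wM; have [u ewu] := noi w.
have wuM : [set w; u] \notin M.
  by apply/negP => wuM; case/negP: wM; apply/bigcupP; exists [set w; u]; rewrite ?set21.
case: (boolP (u \in cover M)) => uM; last first.
  have := maxM _ (matchingU1 ewu wM uM mM).
  by rewrite card_matchingU1 // ltnn.
have [f fM uf] := bigcupP uM.
have mMf : matching e (M :\ f) by apply: matchingS mM; apply: subsetDl.
have wMf : w \notin cover (M :\ f).
  by apply: contra wM => /bigcupP [g /setD1P [_ gM] wg]; apply/bigcupP; exists g.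
have uMf : u \notin cover (M :\ f).
  apply/bigcupP => [[g /setD1P [gf gM] ug]].
  by case/matchingP: mM => _ /(_ g f gM fM gf) /disjointP /(_ u ug uf).
have maxM' : maximum_matching e ([set w; u] |: (M :\ f)).
  apply/maximum_matchingP; split; first exact: matchingU1.
  by move=> M' /maxM; rewrite card_matchingU1 // (cardsD1 f M) fM.
by case/negP: wuM; rewrite -(uniqM _ maxM') setU11.
Qed.

End Matchings.

Section Pairing.
Variables (T : finType) (e : rel T) (m : T -> T).
Hypotheses (em : forall x, e x (m x)) (mm : involutive m).

Lemma matching_pairing : matching e (pairing m).
Proof.
apply/matchingP; split => [f /imsetP [x _ ->]|]; first exact: is_edge_set2.
move=> f g /imsetP [x _ ->] /imsetP [y _ ->] ne; apply/disjointP => z.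
case/set2P => ->; case/set2P => E; case/eqP: ne.
- by rewrite E.
- by rewrite E mm setUC.
- by rewrite -E mm setUC.
- by rewrite (can_inj mm E).
Qed.

Lemma pairing_mem (f : {set T}) (z : T) : f \in pairing m -> z \in f -> m z \in f.
Proof. by case/imsetP => w _ -> /set2P [] ->; rewrite ?mm !inE eqxx ?orbT. Qed.

End Pairing.

Section Accessible.
Variable T : finType.

Lemma accessible_ind (F : {set {set T}}) (P : {set T} -> Prop) :
  (forall X, X \in F -> X != set0 -> exists2 x, x \in X & X :\ x \in F) ->
  P set0 ->
  (forall X x, X \in F -> x \in X -> X :\ x \in F -> P (X :\ x) -> P X) ->
  forall X, X \in F -> P X.
Proof.
move=> acc P0 PS X; have [n le_Xn] := ubnP #|X|; elim: n X le_Xn => // n IH X.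
rewrite ltnS => le_Xn XF; case: (eqVneq X set0) => [-> //|X0].
have [x xX XxF] := acc X XF X0; apply: (PS X x XF xX XxF); apply: IH XxF.
by rewrite (cardsD1 x X) xX in le_Xn.
Qed.

Lemma invariant_subset (s : T -> T) (Q : {set T}) :
  Q != set0 -> {in Q, forall x, s x \in Q} ->
  exists2 C : {set T}, C \subset Q & C != set0 /\ s @: C = C.
Proof.
have [n le_Qn] := ubnP #|Q|; elim: n Q le_Qn => // n IH Q le_Qn Q0 sQ.
have sQQ : s @: Q \subset Q by apply/subsetP => y /imsetP [x /sQ sxQ ->].
case: (eqVneq (s @: Q) Q) => [sQE|sQne]; first by exists Q.
have [x xQ] := set0Pn _ Q0.
have [|||C CsQ CP] := IH (s @: Q).
- by rewrite -ltnS (leq_trans _ le_Qn) // ltnS proper_card // properEneq sQne.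
- by apply/set0Pn; exists (s x); apply: imset_f.
- by move=> _ /imsetP [y /sQ syQ ->]; apply: imset_f.
by exists C => //; apply: subset_trans CsQ sQQ.
Qed.

Lemma exists_succ_cycle (R : rel T) (Q : {set T}) :
  Q != set0 -> (forall x, x \in Q -> exists2 z, z \in Q & R x z) ->
  exists s, exists2 C : {set T}, C \subset Q &
    [/\ C != set0, s @: C = C & {in C, forall x, R x (s x)}].
Proof.
move=> Q0 succ; pose s x := odflt x [pick z in Q | R x z].
have sP x : x \in Q -> (s x \in Q) && R x (s x).
  rewrite /s; case: pickP => [z /andP [-> ->] //|none /succ [z zQ Rxz]].
  by move: (none z); rewrite zQ Rxz.
have [C CQ [C0 sC]] := invariant_subset Q0 (fun x xQ => proj1 (andP (sP x xQ))).
by exists s, C => //; split => // x /(subsetP CQ) /sP /andP [].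
Qed.

End Accessible.

Section GreedoidPerfectMatching.
Variables (T : finType) (e : rel T).
Hypotheses (sym : symmetric e) (irr : irreflexive e).
Hypotheses (wc : well_covered e) (noi : no_isolated e).

(* Otherwise x, B and the part outside N[B] of a maximal stable set through a
   neighbour of x would form a stable set larger than alpha. *)
Lemma local_max_new_neighbor (B : {set T}) (x : T) :
  local_max_stable e B -> stable e (x |: B) -> x \notin B ->
  exists2 y, e x y & y \notin cnbhd e B.
Proof.
move=> /local_maxP [sB maxB] sxB xB.
case: (boolP [exists y, e x y && (y \notin cnbhd e B)]) => [/existsP [y /andP []]|].
  by exists y.
move=> /existsPn none; have [u exu] := noi x.
have [W mW uW] := maximal_stable_ext (stable1 irr u).
have [sW _] := maximal_stableP _ _ mW.
pose R := W :\: cnbhd e B.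
have xR : x \notin R.
  apply: contraL exu => /setDP [xW _]; move/stableP: sW; apply => //.
  by rewrite (subsetP uW) ?set11.
have dRB : [disjoint R & cnbhd e B] by apply/disjointP => z /setDP [_ /negP].
have sBR : stable e (x |: (B :|: R)).
  apply: (stableU1 sym irr) => [|a /setUP [aB|aR]].
  - by have := stableU_cnbhd sym sB (stableS (subsetDl _ _) sW) dRB.
  - by move/stableP: sxB; apply; rewrite !inE ?eqxx ?aB ?orbT.
  - by apply: contraL aR => exa; move: (none a); rewrite exa negbK in_setD => ->.
have := stable_leq_alpha sBR.
rewrite cardsU1 in_setU negb_or xB xR cardsU (disjoint_setI0 _) ?cards0 ?subn0; last first.
  by apply/disjointP => z zB /setDP [_ /negP]; apply; apply/cnbhdP; left.
rewrite -(card_maximal_stable wc mW) -(cardsID (cnbhd e B) W) -/R.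
by rewrite add1n -addSn leq_add2r ltnNge maxB ?subsetIr // (stableS (subsetIl _ _) sW).
Qed.

Hypothesis greedoidPsi : greedoid (Psi e).

Lemma greedoid_matching (A : {set T}) :
  A \in Psi e -> exists M, [/\ matching e M, #|M| = #|A| & cover M \subset cnbhd e A].
Proof.
have [_ acc _] := greedoidPsi; move: A; apply: (accessible_ind acc).
  exists set0; split; rewrite ?cards0 //; last by apply/subsetP => z /bigcupP [f]; rewrite inE.
  by apply/matchingP; split => f; rewrite inE.
move=> A x AP xA BP [M [mM cM coM]]; set B := A :\ x in BP cM coM *.
have /local_maxP [sA _] : local_max_stable e A by rewrite -PsiE.
have nBx : x \notin cnbhd e B.
  apply/cnbhdP => [[/setD1P [/eqP //]|[b /setD1P [_ bA] exb]]].
  by move/stableP: sA => /(_ x b xA bA); rewrite exb.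
have [y exy nBy] : exists2 y, e x y & y \notin cnbhd e B.
  by apply: local_max_new_neighbor; rewrite -?PsiE ?setD11 ?setD1K.
have xM : x \notin cover M by apply: contra nBx; apply: (subsetP coM).
exists ([set x; y] |: M); split.
- by apply: matchingU1 => //; apply: contra nBy; apply: (subsetP coM).
- by rewrite card_matchingU1 // cM (cardsD1 x A) xA.
apply/subsetP => z /bigcupP [f /setU1P [->|fM] zf].
  by apply/cnbhdP; case/set2P: zf => ->; [left | right; exists x; rewrite // sym].
apply: (subsetP (cnbhdS e (subsetDl A [set x]))); apply: (subsetP coM).
by apply/bigcupP; exists f.
Qed.

Lemma greedoid_perfect : #|T| = 2 * alpha e -> exists M, matching e M /\ cover M = setT.
Proof.
move=> cT; have [S sS cS] := alpha_witness e.
have [M [mM cM _]] := greedoid_matching (maximum_stable_Psi sS cS).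
exists M; split => //; apply/eqP; rewrite eqEcard subsetT cardsT cT.
by rewrite (card_cover_matching irr mM) cM cS leqnn.
Qed.

End GreedoidPerfectMatching.

Section PerfectMatchingInvolution.
Variables (T : finType) (e : rel T) (m : T -> T).
Hypotheses (sym : symmetric e) (irr : irreflexive e).
Hypotheses (em : forall x, e x (m x)) (mm : involutive m).

Definition partner_closed (A : {set T}) := forall x y, x \in A -> e x y -> m y \in A.

Lemma stable_partner_notin (A : {set T}) (a : T) : stable e A -> a \in A -> m a \notin A.
Proof. by move=> /stableP sA aA; apply/negP => /(sA _ _ aA); rewrite em. Qed.

Lemma stable_card_leq_partner (A B : {set T}) :
  stable e B -> {in B, forall b, (b \in A) || (m b \in A)} -> #|B| <= #|A|.
Proof.
move=> /stableP sB BA; pose phi b := if b \in A then b else m b.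
have phi_inj : {in B &, injective phi}.
  move=> b c bB cB; rewrite /phi; case: ifP => bA; case: ifP => cA.
  - by [].
  - by move=> E; move: (sB c b cB bB); rewrite E em.
  - by move=> E; move: (sB b c bB cB); rewrite -E em.
  - exact: (can_inj mm).
rewrite -(card_in_imset phi_inj); apply/subset_leq_card/subsetP => _ /imsetP [b bB ->].
by rewrite /phi; case: ifP => // bA; move: (BA b bB); rewrite bA.
Qed.

Lemma closed_local_max (A : {set T}) : stable e A -> partner_closed A -> local_max_stable e A.
Proof.
move=> sA clA; apply/local_maxP; split => // B sub sB.
apply: stable_card_leq_partner sB _ => b /(subsetP sub) /cnbhdP [->//|[a aA eba]].
by rewrite (clA a b aA) ?orbT // sym.
Qed.

Section Alternating.
Variables (C : {set T}) (u v : T -> T).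
Hypotheses (sC : stable e C) (uC : u @: C = C) (vC : v @: C = C).
Hypothesis uvC : {in C, forall x, (u x != v x) && e (u x) (m (v x))}.

Definition alternate : {set {set T}} :=
  [set [set u x; m (v x)] | x in C] :|: [set f in pairing m | [disjoint f & C]].

Let uCC x : x \in C -> u x \in C. Proof. by move=> xC; rewrite -uC imset_f. Qed.
Let vCC x : x \in C -> v x \in C. Proof. by move=> xC; rewrite -vC imset_f. Qed.

Lemma cover_alternate : cover alternate = setT.
Proof.
apply/setP => z; rewrite inE; apply/bigcupP.
case: (boolP (z \in C)) => [|zC].
  rewrite -{1}uC => /imsetP [x xC ->].
  by exists [set u x; m (v x)]; rewrite ?set21 //; apply/setUP; left; apply: imset_f.
case: (boolP (m z \in C)) => [|mzC].
  rewrite -{1}vC => /imsetP [x xC ex].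
  exists [set u x; m (v x)]; last by rewrite -ex mm set22.
  by apply/setUP; left; apply: imset_f.
exists [set z; m z]; last exact: set21.
apply/setUP; right; rewrite inE; apply/andP; split; first exact: imset_f.
by apply/disjointP => w /set2P [] ->; apply/negP.
Qed.

Lemma matching_alternate : matching e alternate.
Proof.
have uinj : {in C &, injective u} by apply/imset_injP; rewrite uC.
have vinj : {in C &, injective v} by apply/imset_injP; rewrite vC.
have mC : matching e [set [set u x; m (v x)] | x in C].
  apply/matchingP; split => [_ /imsetP [x xC ->]|].
    by apply: is_edge_set2; case/andP: (uvC xC).
  move=> _ _ /imsetP [x xC ->] /imsetP [y yC ->] ne.
  have nxy : x != y by apply: contraNneq ne => ->.
  apply/disjointP => z /set2P [] -> /set2P E.
  - case: E => [/(uinj _ _ xC yC) exy|E]; first by rewrite exy eqxx in nxy.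
    by case/negP: (stable_partner_notin sC (vCC yC)); rewrite -E uCC.
  - case: E => [E|/(can_inj mm)/(vinj _ _ xC yC) exy]; last by rewrite exy eqxx in nxy.
    by case/negP: (stable_partner_notin sC (vCC xC)); rewrite E uCC.
have mD : matching e [set f in pairing m | [disjoint f & C]].
  by apply: matchingS (matching_pairing em mm); apply/subsetP => f; rewrite inE => /andP [].
apply: matchingU mC mD _; apply/disjointP => z /bigcupP [_ /imsetP [x xC ->] zx].
case/bigcupP => f; rewrite inE => /andP [fM /disjointP dfC] zf.
case/set2P: zx => ez; first by apply: (dfC (u x)); [rewrite -ez | apply: uCC].
apply: (dfC (v x)); last exact: vCC.
by rewrite -[v x]mm -ez; apply: pairing_mem fM zf.
Qed.

Lemma alternate_neq : C != set0 -> alternate != pairing m.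
Proof.
case/set0Pn => x xC; apply/negP => /eqP E.
have : [set u x; m (v x)] \in pairing m.
  by rewrite -E; apply/setUP; left; apply: imset_f.
case/andP: (uvC xC) => nuv _ /imsetP [w _ /eq_set2 [[eu ev]|[eu ev]]]; move: nuv.
  by rewrite eu (can_inj mm ev) eqxx.
by rewrite eu -ev mm eqxx.
Qed.

End Alternating.

Hypotheses (wc : well_covered e) (cT : #|T| = 2 * alpha e).

Lemma maximal_stable_partner (W : {set T}) (x : T) :
  maximal_stable e W -> (x \in W) || (m x \in W).
Proof.
move=> mW; have cW := card_maximal_stable wc mW.
have [sW _] := maximal_stableP _ _ mW.
apply/negPn/negP; rewrite negb_or => /andP [xW mxW].
have dW : [disjoint W & m @: W].
  apply/disjointP => z zW /imsetP [w wW ez].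
  by case/negP: (stable_partner_notin sW wW); rewrite -ez.
have xmW : x \notin m @: W by rewrite -[x]mm (mem_imset _ _ (can_inj mm)).
have := max_card (x |: (W :|: m @: W)).
rewrite cardsU1 inE negb_or xW xmW cardsU (disjoint_setI0 dW) cards0 subn0.
by rewrite (card_imset _ (can_inj mm)) cW cT addnn -mul2n ltnn.
Qed.

Lemma adj_partner_adj (u v x : T) : e u x -> e v (m x) -> e u v.
Proof.
move=> eux evmx; apply/negPn/negP => nuv.
have [W mW uvW] := maximal_stable_ext (stable2 sym irr nuv).
have [/stableP sW _] := maximal_stableP _ _ mW.
have uW : u \in W by rewrite (subsetP uvW) ?set21.
have vW : v \in W by rewrite (subsetP uvW) ?set22.
case/orP: (maximal_stable_partner x mW) => [xW|mxW].
  by move: (sW u x uW xW); rewrite eux.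
by move: (sW v (m x) vW mxW); rewrite evmx.
Qed.

Lemma adj_partnerN (y c : T) : e y c -> ~~ e y (m c).
Proof. by move=> eyc; apply/negP => /(adj_partner_adj eyc); rewrite irr. Qed.

Definition partner_swap (A : {set T}) (y : T) : {set T} :=
  let X := [set a in A | e y a] in y |: ((A :\: X) :|: m @: X).

Lemma stable_partner_swap (A : {set T}) (y : T) : stable e A -> stable e (partner_swap A y).
Proof.
move=> sA; rewrite /partner_swap; set X := [set a in A | e y a].
have eyX c : c \in X -> e y c by rewrite inE => /andP [].
have AX a : a \in A :\: X -> ~~ e y a by rewrite !inE => /andP [nX aA]; rewrite aA in nX.
apply: (stableU1 sym irr) => [|_ /setUP [/AX //|/imsetP [c /eyX /adj_partnerN + ->] //]].
apply: stableU => //; first exact: stableS (subsetDl A X) sA.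
  apply/stableP => _ _ /imsetP [c cX ->] /imsetP [d dX ->]; apply/negP => emcd.
  have := adj_partner_adj (eyX c cX) (_ : e (m d) (m c)).
  by rewrite (negbTE (adj_partnerN (eyX d dX))) sym emcd => /(_ isT).
move=> a _ aAX /imsetP [c /eyX eyc ->]; apply/negP => eamc.
by case/negP: (AX a aAX); apply: adj_partner_adj eyc eamc.
Qed.

Lemma partner_swap_sub (A : {set T}) (x y : T) :
  x \in A -> e x y -> partner_swap A y \subset cnbhd e A.
Proof.
move=> xA exy; apply/subsetP => z /setU1P [->|/setUP [/setDP [zA _]|/imsetP [a]]].
- by apply/cnbhdP; right; exists x; rewrite // sym.
- by apply/cnbhdP; left.
- by rewrite inE => /andP [aA _] ->; apply/cnbhdP; right; exists a; rewrite // sym.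
Qed.

Lemma card_partner_swap (A : {set T}) (y : T) :
  stable e A -> y \notin A -> m y \notin A -> #|partner_swap A y| = #|A|.+1.
Proof.
move=> sA yA myA; rewrite /partner_swap; set X := [set a in A | e y a].
have XA : X \subset A by apply/subsetP => a; rewrite inE => /andP [].
have dX : [disjoint A :\: X & m @: X].
  apply/disjointP => z /setDP [zA _] /imsetP [c /(subsetP XA) cA ez].
  by case/negP: (stable_partner_notin sA cA); rewrite -ez.
have ymX : y \notin m @: X.
  by apply: contra myA => /imsetP [c /(subsetP XA) cA ->]; rewrite mm.
rewrite cardsU1 inE negb_or inE negb_and yA orbT ymX /= cardsU (disjoint_setI0 dX).
rewrite cards0 subn0 (card_imset _ (can_inj mm)) cardsD (setIidPr XA).
by rewrite subnK ?subset_leq_card.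
Qed.

Lemma local_max_closed (A : {set T}) : local_max_stable e A -> partner_closed A.
Proof.
move=> /local_maxP [sA maxA] x y xA exy; apply/negPn/negP => myA.
have yA : y \notin A by apply: contraL exy => yA; move/stableP: sA; apply.
have := maxA _ (partner_swap_sub xA exy) (stable_partner_swap y sA).
by rewrite card_partner_swap // ltnn.
Qed.

Lemma PsiP (A : {set T}) : reflect (stable e A /\ partner_closed A) (A \in Psi e).
Proof.
rewrite PsiE; apply: (iffP idP) => [lmA|[]]; last exact: closed_local_max.
by split; [case/andP: lmA | apply: local_max_closed].
Qed.

Section UniquePerfectMatching.
Hypothesis pairing_uniq : forall M, matching e M -> cover M = setT -> M = pairing m.

Lemma no_alternating_cycle (C : {set T}) (u v : T -> T) :
  stable e C -> C != set0 -> u @: C = C -> v @: C = C ->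
  {in C, forall x, (u x != v x) && e (u x) (m (v x))} -> False.
Proof.
move=> sC C0 uC vC uvC; case/negP: (alternate_neq uvC C0); apply/eqP/pairing_uniq.
  exact: matching_alternate.
exact: cover_alternate.
Qed.

Lemma stable_source (Q : {set T}) :
  stable e Q -> Q != set0 -> exists2 x, x \in Q & {in Q, forall a, a != x -> ~~ e a (m x)}.
Proof.
move=> sQ Q0; case: (boolP [exists x in Q, [forall a in Q, (a != x) ==> ~~ e a (m x)]]).
  by case/exists_inP => x xQ /forall_inP H; exists x => // a /H /implyP.
move=> /exists_inPn none.
have succ x : x \in Q -> exists2 a, a \in Q & (a != x) && e a (m x).
  by move=> /none /forall_inPn [a aQ]; rewrite negb_imply negbK; exists a.
have [s [C CQ [C0 sC sR]]] := exists_succ_cycle Q0 succ.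
by case: (no_alternating_cycle (stableS CQ sQ) C0 sC (imset_id C) sR).
Qed.

Lemma stable_sink (Q : {set T}) :
  stable e Q -> Q != set0 -> exists2 x, x \in Q & {in Q, forall z, z != x -> ~~ e x (m z)}.
Proof.
move=> sQ Q0; case: (boolP [exists x in Q, [forall z in Q, (z != x) ==> ~~ e x (m z)]]).
  by case/exists_inP => x xQ /forall_inP H; exists x => // z /H /implyP.
move=> /exists_inPn none.
have succ x : x \in Q -> exists2 z, z \in Q & (x != z) && e x (m z).
  by move=> /none /forall_inPn [z zQ]; rewrite negb_imply negbK eq_sym; exists z.
have [s [C CQ [C0 sC sR]]] := exists_succ_cycle Q0 succ.
by case: (no_alternating_cycle (stableS CQ sQ) C0 (imset_id C) sC sR).
Qed.

Lemma Psi_accessible (A : {set T}) :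
  A \in Psi e -> A != set0 -> exists2 x, x \in A & A :\ x \in Psi e.
Proof.
move=> /PsiP [sA clA] A0; have [x xA srcx] := stable_source sA A0.
exists x => //; apply/PsiP; split=> [|b y /setD1P [bx bA] eby].
  exact: stableS (subsetDl A [set x]) sA.
rewrite !inE (clA b y bA eby) andbT; apply: (contraTneq _ eby) => myx.
by rewrite -[y]mm myx; apply: srcx.
Qed.

Lemma Psi_exchange (X Y : {set T}) :
  X \in Psi e -> Y \in Psi e -> #|X| = #|Y|.+1 ->
  exists2 x, x \in X :\: Y & x |: Y \in Psi e.
Proof.
move=> /PsiP [sX clX] /PsiP [sY clY] cXY.
pose Q := [set x in X | (x \notin Y) && (m x \notin Y)].
have QX : Q \subset X by apply/subsetP => x; rewrite inE => /andP [].
have Q0 : Q != set0.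
  apply/negP => /eqP Q0; suff : #|X| <= #|Y| by rewrite cXY ltnn.
  apply: stable_card_leq_partner sX _ => x xX; apply: contraT; rewrite negb_or => xY.
  by rewrite -(in_set0 x) -Q0 inE xX.
have [x xQ sinkx] := stable_sink (stableS QX sX) Q0.
move: (xQ); rewrite inE => /and3P [xX xY mxY].
have nxY y : y \in Y -> ~~ e x y.
  by move=> yY; apply: contra mxY => exy; apply: (clY y); rewrite // sym.
exists x; first by rewrite inE xY.
apply/PsiP; split; first exact: stableU1.
move=> a w /setU1P [->|aY] eaw; last by rewrite !inE (clY a w aY eaw) orbT.
have mwX : m w \in X := clX x w xX eaw.
case: (boolP (m w \in Y)) => mwY; first by rewrite inE mwY orbT.
have wY : w \notin Y by apply: contraL eaw; apply: nxY.
have mwQ : m w \in Q by rewrite inE mwX mwY mm wY.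
apply: contraTT eaw => nmw; rewrite -[w]mm sinkx //.
by apply: contraNneq nmw => ->; rewrite setU11.
Qed.

Lemma greedoid_Psi : greedoid (Psi e).
Proof.
split; [apply/set0Pn; exists set0 | exact: Psi_accessible | exact: Psi_exchange].
by apply/PsiP; split=> [|x y]; rewrite ?stable0 ?inE.
Qed.

End UniquePerfectMatching.

Lemma greedoid_partner_eq (m' : T -> T) :
  greedoid (Psi e) -> (forall x, e x (m' x)) -> involutive m' -> m' =1 m.
Proof.
move=> [_ acc _] em' mm'.
have onPsi A : A \in Psi e -> {in A, m' =1 m}.
  move: A; apply: (accessible_ind acc) => [z|A x /PsiP [_ clA] xA _ IH z zA].
    by rewrite inE.
  case: (eqVneq z x) => [-> {z zA}|zx]; last by apply: IH; rewrite !inE zx.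
  apply/eqP/negPn/negP => m'x.
  have wx : m (m' x) != x by apply: contraNneq m'x => /(congr1 m); rewrite mm => ->.
  have wA : m (m' x) \in A :\ x by rewrite !inE wx (clA x _ xA (em' x)).
  by case/eqP: wx; apply: (can_inj mm'); rewrite IH // mm.
move=> x; have [W mW xW] := maximal_stable_ext (stable1 irr x).
have [sW _] := maximal_stableP _ _ mW.
apply: (onPsi W); last by rewrite (subsetP xW) ?set11.
exact: maximum_stable_Psi sW (card_maximal_stable wc mW).
Qed.

End PerfectMatchingInvolution.

Lemma unique_matching_greedoid (T : finType) (e : rel T) :
  simple_graph e -> very_well_covered e -> unique_maximum_matching e ->
  greedoid (Psi e).
Proof.
move=> [sym irr] [wc noi cT] [M [maxM uniqM]].
have cM := unique_maximum_perfect noi maxM uniqM.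
case/maximum_matchingP: (maxM) => mM _.
have [m [em mm eM]] := perfect_pairing irr sym mM cM.
apply: (greedoid_Psi sym irr em mm wc cT) => M' mM' cM'.
by rewrite -eM; apply: uniqM; apply: perfect_maximum.
Qed.

Lemma greedoid_unique_matching (T : finType) (e : rel T) :
  simple_graph e -> very_well_covered e -> greedoid (Psi e) ->
  unique_maximum_matching e.
Proof.
move=> [sym irr] [wc noi cT] gPsi.
have [M [mM cM]] := greedoid_perfect sym irr wc noi gPsi cT.
have [m [em mm eM]] := perfect_pairing irr sym mM cM.
exists M; split => [|M' maxM']; first exact: perfect_maximum.
have cM' := maximum_perfect irr mM cM maxM'.
case/maximum_matchingP: (maxM') => mM' _.
have [m' [em' mm' ->]] := perfect_pairing irr sym mM' cM'.
rewrite eM; apply: eq_imset => x.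
by rewrite (greedoid_partner_eq sym irr em mm wc cT gPsi em' mm').
Qed.

Unset Implicit Arguments.

Theorem theorem10 (T : finType) (e : rel T) :
  simple_graph e -> very_well_covered e -> triangle_free e ->
  (greedoid (Psi e) <-> unique_maximum_matching e).
Proof.
move=> sg vwc _; split; [exact: greedoid_unique_matching | exact: unique_matching_greedoid].
Qed.
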